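(* Let $((\mathcal{S},\mathcal{T}),(\mathcal{U},\mathcal{V}))$ be a twin cotorsion pair on a triangulated category $\mathcal{C}$, and put $\mathcal{W}=\mathcal{U}\cap\mathcal{T}$, $\mathcal{C}^+=\mathcal{W}*\mathcal{V}[1]$, $\mathcal{C}^-=\mathcal{S}[-1]*\mathcal{W}$. Then $\mathcal{U}\subseteq\mathcal{C}^-$ and $\mathcal{T}\subseteq\mathcal{C}^+$.
   Context: For full subcategories $\mathcal{X},\mathcal{Y}$, $\mathcal{X}*\mathcal{Y}$ is the full subcategory of objects $C$ admitting a distinguished triangle $X\to C\to Y\to X[1]$ with $X\in\mathcal{X}$, $Y\in\mathcal{Y}$. A cotorsion pair $(\mathcal{A},\mathcal{B})$: full subcategories closed under isomorphisms, finite direct sums and summands with $\mathcal{C}=\mathcal{A}*\mathcal{B}[1]$ and $\mathcal{C}(\mathcal{A},\mathcal{B}[1])=0$. A twin cotorsion pair $((\mathcal{S},\mathcal{T}),(\mathcal{U},\mathcal{V}))$ consists of two cotorsion pairs with $\mathcal{C}(\mathcal{S},\mathcal{V}[1])=0$. *)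

From HB Require Import structures.
From mathcomp Require Import all_boot all_algebra.
Set Implicit Arguments. Unset Strict Implicit. Unset Printing Implicit Defensive.
Import GRing.Theory.
Local Open Scope ring_scope.

Record TriangCat := {
  obj : Type;
  hom : obj -> obj -> zmodType;
  idm : forall X : obj, hom X X;
  comp : forall X Y Z : obj, hom Y Z -> hom X Y -> hom X Z; (* comp g f = g o f *)
  sh : obj -> obj;
  shm : forall X Y : obj, hom X Y -> hom (sh X) (sh Y);
  dist : forall X Y Z : obj, hom X Y -> hom Y Z -> hom Z (sh X) -> Prop;

  comp_assoc : forall X Y Z W (h : hom Z W) (g : hom Y Z) (f : hom X Y),
      comp h (comp g f) = comp (comp h g) f;
  comp_id_l : forall X Y (f : hom X Y), comp (idm Y) f = f;
  comp_id_r : forall X Y (f : hom X Y), comp f (idm X) = f;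
  comp_addl : forall X Y Z (g1 g2 : hom Y Z) (f : hom X Y),
      comp (g1 + g2) f = comp g1 f + comp g2 f;
  comp_addr : forall X Y Z (g : hom Y Z) (f1 f2 : hom X Y),
      comp g (f1 + f2) = comp g f1 + comp g f2;
  zero_obj_ex : exists Z : obj,
      (forall X (f g : hom Z X), f = g) /\ (forall X (f g : hom X Z), f = g);
  biprod_ex : forall X1 X2 : obj, exists P (i1 : hom X1 P) (i2 : hom X2 P)
      (p1 : hom P X1) (p2 : hom P X2),
      [/\ comp p1 i1 = idm X1, comp p2 i2 = idm X2, comp p2 i1 = 0,
          comp p1 i2 = 0 & comp i1 p1 + comp i2 p2 = idm P];
  shm_id : forall X, shm (idm X) = idm (sh X);
  shm_comp : forall X Y Z (g : hom Y Z) (f : hom X Y),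
      shm (comp g f) = comp (shm g) (shm f);
  shm_add : forall X Y (f g : hom X Y), shm (f + g) = shm f + shm g;
  (* ... which is an autoequivalence: fully faithful, essentially surjective *)
  shm_inj : forall X Y (f g : hom X Y), shm f = shm g -> f = g;
  shm_surj : forall X Y (g : hom (sh X) (sh Y)), exists f : hom X Y, shm f = g;
  sh_esurj : forall Y, exists X (u : hom (sh X) Y) (v : hom Y (sh X)),
      comp v u = idm (sh X) /\ comp u v = idm Y;

  dist_iso : forall X Y Z X' Y' Z' (f : hom X Y) (g : hom Y Z) (h : hom Z (sh X))
      (f' : hom X' Y') (g' : hom Y' Z') (h' : hom Z' (sh X'))
      (a : hom X X') (b : hom Y Y') (c : hom Z Z')
      (a' : hom X' X) (b' : hom Y' Y) (c' : hom Z' Z),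
      comp a' a = idm X -> comp a a' = idm X' ->
      comp b' b = idm Y -> comp b b' = idm Y' ->
      comp c' c = idm Z -> comp c c' = idm Z' ->
      comp b f = comp f' a -> comp c g = comp g' b -> comp (shm a) h = comp h' c ->
      dist f g h -> dist f' g' h';
  dist_id : forall X Z : obj,
      (forall W (f g : hom Z W), f = g) -> (forall W (f g : hom W Z), f = g) ->
      dist (idm X) (0 : hom X Z) (0 : hom Z (sh X));
  dist_ex : forall X Y (f : hom X Y), exists Z (g : hom Y Z) (h : hom Z (sh X)),
      dist f g h;
  dist_rot : forall X Y Z (f : hom X Y) (g : hom Y Z) (h : hom Z (sh X)),
      dist f g h <-> dist g h (- shm f);
  dist_mor : forall X Y Z X' Y' Z' (f : hom X Y) (g : hom Y Z) (h : hom Z (sh X))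
      (f' : hom X' Y') (g' : hom Y' Z') (h' : hom Z' (sh X'))
      (a : hom X X') (b : hom Y Y'),
      dist f g h -> dist f' g' h' -> comp b f = comp f' a ->
      exists c : hom Z Z', comp c g = comp g' b /\ comp (shm a) h = comp h' c;
  dist_oct : forall X Y Z Z' X' Y' (f : hom X Y) (g : hom Y Z)
      (u : hom Y Z') (u' : hom Z' (sh X))
      (v : hom Z X') (v' : hom X' (sh Y))
      (w : hom Z Y') (w' : hom Y' (sh X)),
      dist f u u' -> dist g v v' -> dist (comp g f) w w' ->
      exists (a : hom Z' Y') (b : hom Y' X'),
        [/\ dist a b (comp (shm u) v'),
            comp a u = comp w g, comp w' a = u',
            comp b w = v & comp v' b = comp (shm f) w']
}.

Arguments idm {t} X.
Arguments comp {t X Y Z}.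
Arguments sh {t}.
Arguments shm {t X Y}.
Arguments dist {t X Y Z}.
Arguments hom t : clear implicits.
Arguments obj t : clear implicits.

Section Subcats.
Variable C : TriangCat.

(* full subcategories are given by predicates on objects *)
Definition subcat := obj C -> Prop.

Definition isoObj (X Y : obj C) : Prop :=
  exists (f : hom C X Y) (g : hom C Y X), comp g f = idm X /\ comp f g = idm Y.

Definition is_zero_obj (Z : obj C) : Prop :=
  (forall W (f g : hom C Z W), f = g) /\ (forall W (f g : hom C W Z), f = g).

Definition is_biprod (X1 X2 P : obj C) : Prop :=
  exists (i1 : hom C X1 P) (i2 : hom C X2 P) (p1 : hom C P X1) (p2 : hom C P X2),
    [/\ comp p1 i1 = idm X1, comp p2 i2 = idm X2, comp p2 i1 = 0,
        comp p1 i2 = 0 & comp i1 p1 + comp i2 p2 = idm P].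

(* X * Y : objects E with a distinguished triangle A -> E -> B -> A[1], A in X, B in Y *)
Definition ext (X Y : subcat) : subcat := fun E =>
  exists (A B : obj C) (f : hom C A E) (g : hom C E B) (h : hom C B (sh A)),
    [/\ dist f g h, X A & Y B].

(* X[1] and X[-1] (closed under isomorphism) *)
Definition shift1 (X : subcat) : subcat := fun Y =>
  exists A, X A /\ isoObj (sh A) Y.
Definition shiftm1 (X : subcat) : subcat := fun Y =>
  exists A, X A /\ isoObj (sh Y) A.

Definition capS (X Y : subcat) : subcat := fun E => X E /\ Y E.
Definition subS (X Y : subcat) : Prop := forall E, X E -> Y E.

Definition hom_vanish (X Y : subcat) : Prop :=
  forall A B (f : hom C A B), X A -> Y B -> f = 0.

Definition good_subcat (X : subcat) : Prop :=
  [/\ (forall A B, isoObj A B -> X A -> X B),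
      (forall Z, is_zero_obj Z -> X Z),
      (forall A B P, is_biprod A B P -> X A -> X B -> X P) &
      (forall A B P, is_biprod A B P -> X P -> X A /\ X B)].

Definition cotorsion_pair (A B : subcat) : Prop :=
  [/\ good_subcat A, good_subcat B,
      (forall E, ext A (shift1 B) E) &
      hom_vanish A (shift1 B)].

Definition twin_cotorsion_pair (S T U V : subcat) : Prop :=
  [/\ cotorsion_pair S T, cotorsion_pair U V & hom_vanish S (shift1 V)].

End Subcats.

(* For U0 in U, the cotorsion pair (S, T) gives a triangle S1 -> U0[1] -> B -> S1[1]
   with B in T[1]; desuspending its first map, A -> U0 with A[1] = S1, its cone Z is
   the wanted object of W.  Z lies in U because U is closed under extensions and
   contains S (as Hom(S, V[1]) = 0), and Z lies in T because Z[1] and B are cones of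
   isomorphic morphisms, so Hom(S, Z[1]) = 0 as Hom(S, B) = 0.  For T0 in T, the
   pair (U, V) gives U1 -> T0 -> V1[1], and Hom(S, U1[1]) = 0 since it is squeezed
   between Hom(S, V1[1]) = 0 and Hom(S, T0[1]) = 0. *)

From mathcomp Require Import all_boot all_algebra.
Set Implicit Arguments. Unset Strict Implicit. Unset Printing Implicit Defensive.
Import GRing.Theory.
Local Open Scope ring_scope.

Section Triangulated.
Variable C : TriangCat.

Lemma comp0l X Y Z (f : hom C X Y) : comp (0 : hom C Y Z) f = 0.
Proof.
have H := comp_addl (0 : hom C Y Z) 0 f; rewrite addr0 in H.
by apply: (@addrI _ (comp 0 f)); rewrite addr0 -H.
Qed.

Lemma comp0r X Y Z (g : hom C Y Z) : comp g (0 : hom C X Y) = 0.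
Proof.
have H := comp_addr g (0 : hom C X Y) 0; rewrite addr0 in H.
by apply: (@addrI _ (comp g 0)); rewrite addr0 -H.
Qed.

Lemma compNl X Y Z (g : hom C Y Z) (f : hom C X Y) : comp (- g) f = - comp g f.
Proof. by apply: (@addrI _ (comp g f)); rewrite -comp_addl !subrr comp0l. Qed.

Lemma compNr X Y Z (g : hom C Y Z) (f : hom C X Y) : comp g (- f) = - comp g f.
Proof. by apply: (@addrI _ (comp g f)); rewrite -comp_addr !subrr comp0r. Qed.

Lemma shm0 X Y : shm (0 : hom C X Y) = 0.
Proof.
have H := shm_add (0 : hom C X Y) 0; rewrite addr0 in H.
by apply: (@addrI _ (shm (0 : hom C X Y))); rewrite addr0 -H.
Qed.

Lemma dist_rotl X Y Z (f : hom C X Y) g (h : hom C Z (sh X)) :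
  dist f g h -> dist g h (- shm f).
Proof. exact: (proj1 (dist_rot f g h)). Qed.

Lemma dist_shift X Y Z (f : hom C X Y) g (h : hom C Z (sh X)) :
  dist f g h -> dist (- shm f) (- shm g) (- shm h).
Proof. by move=> /dist_rotl /dist_rotl /dist_rotl. Qed.

Lemma dist_to_zero W : exists Z0 (z : hom C W Z0) (z' : hom C Z0 (sh W)),
  dist z z' (- idm (sh W)).
Proof.
have [Z0 [h1 h2]] := zero_obj_ex C.
by exists Z0, 0, 0; rewrite -(shm_id W); apply/dist_rotl/dist_id.
Qed.

Lemma dist_comp0 X Y Z (f : hom C X Y) g (h : hom C Z (sh X)) :
  dist f g h -> comp g f = 0.
Proof.
move=> D; have [Z0 [h1 h2]] := zero_obj_ex C.
have [c [Hc _]] := dist_mor (a := idm X) (b := f) (dist_id X h1 h2) D erefl.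
by rewrite -Hc comp0r.
Qed.

Lemma dist_factor_fst X Y Z (f : hom C X Y) g (h : hom C Z (sh X))
    W (s : hom C W Y) :
  dist f g h -> comp g s = 0 -> exists c, s = comp f c.
Proof.
move=> D Hs; have [Z0 [z [z' Dz]]] := dist_to_zero W.
have E : comp (0 : hom C Z0 Z) z = comp g s by rewrite comp0l Hs.
have [c [_ Hc]] := dist_mor Dz (dist_rotl D) E.
have [c0 Hc0] := shm_surj c.
exists c0; apply: shm_inj; rewrite shm_comp Hc0.
by apply: oppr_inj; rewrite -compNl -Hc compNr comp_id_r.
Qed.

Lemma dist_factor_snd X Y Z (f : hom C X Y) g (h : hom C Z (sh X))
    W (u : hom C Y W) :
  dist f g h -> comp u f = 0 -> exists c, u = comp c g.
Proof.
move=> D Hu; have [Z0 [z [z' Dz]]] := dist_to_zero W.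
have E : comp (shm u) (- shm f) = comp z' (0 : hom C (sh X) Z0).
  by rewrite compNr -shm_comp Hu shm0 oppr0 comp0r.
have [c [Hc _]] := dist_mor (dist_shift D) (dist_rotl Dz) E.
have [c0 Hc0] := shm_surj c.
exists c0; apply: shm_inj; rewrite shm_comp Hc0.
by apply: oppr_inj; rewrite -compNr Hc compNl comp_id_l.
Qed.

Lemma dist_hom_vanish_from X Y Z (f : hom C X Y) g (h : hom C Z (sh X)) W :
  dist f g h ->
  (forall s : hom C W X, s = 0) -> (forall s : hom C W Z, s = 0) ->
  forall s : hom C W Y, s = 0.
Proof.
move=> D HX HZ s; have [c ->] := dist_factor_fst D (HZ (comp g s)).
by rewrite (HX c) comp0r.
Qed.

Lemma dist_hom_vanish_to X Y Z (f : hom C X Y) g (h : hom C Z (sh X)) W :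
  dist f g h ->
  (forall u : hom C X W, u = 0) -> (forall u : hom C Z W, u = 0) ->
  forall u : hom C Y W, u = 0.
Proof.
move=> D HX HZ u; have [c ->] := dist_factor_snd D (HX (comp u f)).
by rewrite (HZ c) comp0l.
Qed.

(* The comparison morphism gam : Z[1] -> B given by TR3 stands in for an
   isomorphism of cones, which would need the five lemma. *)
Lemma cone_hom_vanish A U0 Z S1 B X0 (f : hom C A U0) g (h : hom C Z (sh A))
    (a : hom C S1 (sh U0)) b (c : hom C B (sh S1))
    (phi : hom C (sh A) S1) (phi' : hom C S1 (sh A)) :
  dist f g h -> dist a b c ->
  comp phi' phi = idm (sh A) -> comp phi phi' = idm S1 -> shm f = comp a phi ->
  (forall t : hom C X0 B, t = 0) -> forall s : hom C X0 (sh Z), s = 0.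
Proof.
move=> Dfgh Dabc e1 e2 Hf HB s.
have P := dist_shift Dfgh.
have E : comp (- idm (sh U0)) (- shm f) = comp a phi.
  by rewrite compNl compNr comp_id_l opprK Hf.
have [gam [_ Hgam]] := dist_mor P Dabc E.
have Hhs : comp (- shm h) s = 0.
  have H0 : comp (shm phi) (comp (- shm h) s) = 0.
    by rewrite comp_assoc Hgam -comp_assoc (HB (comp gam s)) comp0r.
  rewrite -(comp_id_l (comp (- shm h) s)) -shm_id -e1 shm_comp.
  by rewrite -comp_assoc H0 comp0r.
have [d ->] := dist_factor_fst (dist_rotl P) Hhs.
have [e ->] := dist_factor_fst Dabc (HB (comp b d)).
have -> : a = comp (shm f) phi' by rewrite Hf -comp_assoc e2 comp_id_r.
rewrite compNl !comp_assoc -shm_comp (dist_comp0 Dfgh) shm0.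
by rewrite !comp0l oppr0.
Qed.

Lemma good_subcat_retract (A : subcat C) X Y (i : hom C X Y) (r : hom C Y X) :
  good_subcat A -> A Y -> comp r i = idm X -> A X.
Proof.
case=> _ _ _ hsum AY Hri.
have [K [p [q D]]] := dist_ex i.
have Hpi := dist_comp0 D.
have Hq : comp q (idm K) = 0.
  have H := dist_comp0 (dist_rotl (dist_rotl D)).
  rewrite comp_id_r -(comp_id_l q) -shm_id -Hri shm_comp -comp_assoc.
  by rewrite -[comp (shm i) q]opprK -compNl H oppr0 comp0r.
have [s Hs] := dist_factor_fst (dist_rotl D) Hq.
have Hu : comp (idm Y - comp i r) i = 0.
  by rewrite comp_addl compNl comp_id_l -comp_assoc Hri comp_id_r subrr.
have [t Ht] := dist_factor_snd D Hu.
have Hpt : comp p t = idm K.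
  have H : comp (comp p t) p = p.
    by rewrite -comp_assoc -Ht comp_addr compNr comp_id_r comp_assoc Hpi comp0l subr0.
  by rewrite -(comp_id_r (comp p t)) Hs comp_assoc H.
have Hrt : comp r t = 0.
  have H : comp (comp r t) p = 0.
    by rewrite -comp_assoc -Ht comp_addr compNr comp_id_r comp_assoc Hri comp_id_l subrr.
  by rewrite -(comp_id_r (comp r t)) Hs comp_assoc H comp0l.
apply: (proj1 (hsum X K Y _ AY)).
by exists i, t, r, p; split => //; rewrite -Ht addrC subrK.
Qed.

Lemma cotorsion_right_of_hom_vanish (A B : subcat C) X : cotorsion_pair A B ->
  (forall A0 (s : hom C A0 (sh X)), A A0 -> s = 0) -> B X.
Proof.
case=> _ gB hext _ H.
have [S1 [B' [a [b [c [D HS1 [T1 [HT1 [psi [psi' [e1 e2]]]]]]]]]]] := hext (sh X).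
have [r Hr] := dist_factor_snd D (etrans (comp_id_l a) (H _ a HS1)).
have [i Hi] := shm_surj (comp psi' b).
have [r0 Hr0] := shm_surj (comp r psi).
apply: (good_subcat_retract (i := i) (r := r0) gB HT1).
apply: shm_inj; rewrite shm_comp Hi Hr0 shm_id.
by rewrite -comp_assoc (comp_assoc psi) e2 comp_id_l -Hr.
Qed.

Lemma cotorsion_left_of_hom_vanish (A B : subcat C) X : cotorsion_pair A B ->
  (forall B0 (t : hom C X B0), shift1 B B0 -> t = 0) -> A X.
Proof.
case=> gA _ hext _ H.
have [U1 [B0 [f [g [h [D HU1 HB0]]]]]] := hext X.
have [c Hc] := dist_factor_fst D (etrans (comp_id_r g) (H _ g HB0)).
exact: (good_subcat_retract (i := c) (r := f) gA HU1).
Qed.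

End Triangulated.

Section TwinCotorsionPair.
Variables (C : TriangCat) (S T U V : subcat C).
Hypotheses (HST : cotorsion_pair S T) (HUV : cotorsion_pair U V)
  (vSV : hom_vanish S (shift1 V)).

Lemma twin_left_sub_ext : subS U (ext (shiftm1 S) (capS U T)).
Proof.
move=> U0 HU0.
have [gS _ extST vST] := HST; have [_ _ _ vUV] := HUV.
have [S1 [B [a [b [c [Dabc HS1 HB]]]]]] := extST (sh U0).
have [A [phi [phi' [e1 e2]]]] := sh_esurj S1.
have [f Hf] := shm_surj (comp a phi).
have [Z [g [h Dfgh]]] := dist_ex f.
have HSA : S (sh A).
  by case: gS => isoS _ _ _; apply: isoS HS1; exists phi', phi.
exists A, Z, f, g, h; split => //; first by exists S1; split => //; exists phi, phi'.
split.
- apply: (cotorsion_left_of_hom_vanish HUV) => B0 t HB0.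
  apply: (dist_hom_vanish_to (dist_rotl Dfgh)) => u.
  + exact: vUV HU0 HB0.
  + exact: vSV HSA HB0.
- apply: (cotorsion_right_of_hom_vanish HST) => S0 s HS0.
  apply: (cone_hom_vanish Dfgh Dabc e1 e2 Hf) => t.
  exact: vST HS0 HB.
Qed.

Lemma twin_right_sub_ext : subS T (ext (capS U T) (shift1 V)).
Proof.
move=> T0 HT0.
have [_ _ _ vST] := HST; have [_ _ extUV _] := HUV.
have [U1 [B [f [g [h [D HU1 HB]]]]]] := extUV T0.
exists U1, B, f, g, h; split => //; split => //.
apply: (cotorsion_right_of_hom_vanish HST) => S0 s HS0.
have HT : shift1 T (sh T0).
  by exists T0; split => //; exists (idm _), (idm _); rewrite comp_id_l.
apply: (dist_hom_vanish_from (dist_rotl (dist_rotl D))) => t.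
- exact: vSV HS0 HB.
- exact: vST HS0 HT.
Qed.

End TwinCotorsionPair.

Theorem lemma2p5 (C : TriangCat) (S T U V : obj C -> Prop) :
  twin_cotorsion_pair S T U V ->
  let W := capS U T in
  subS U (ext (shiftm1 S) W) /\ subS T (ext W (shift1 V)).
Proof.
move=> [HST HUV vSV] W; split.
- exact: twin_left_sub_ext HST HUV vSV.
- exact: twin_right_sub_ext HST HUV vSV.
Qed.
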